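(* Consider the Rayleigh fading channel $y=hx+v$, $v\sim\mathcal{CN}(0,1)$, perfect CSI at transmitter and receiver, $|h|^2$ exponential with unit mean. Let $\mathcal{A}(\mathrm{SNR})$ be a variable PAPR with $\mathcal{A}(\mathrm{SNR})\to\infty$ and $\mathcal{A}(\mathrm{SNR})\,\mathrm{SNR}\to0$ as $\mathrm{SNR}\to0$, and such that the peak constraint is effective ($\mathcal{A}(\mathrm{SNR})\,\mathrm{SNR}<1/\lambda_0$, where $\mathrm{SNR}=\mathbf{E}[[1/\lambda_0-1/|h|^2]^+]$). Let $\lambda$ be determined by $\mathrm{SNR}=\mathbf{E}[\min\{[1/\lambda-1/|h|^2]^+,\mathcal{A}(\mathrm{SNR})\,\mathrm{SNR}\}]$ with $\lambda\mathcal{A}(\mathrm{SNR})\mathrm{SNR}<1$, define $$l(\mathrm{SNR})=\frac{1}{\frac1\lambda-\mathcal{A}(\mathrm{SNR})\,\mathrm{SNR}}-\lambda,$$ and suppose $l_0=\lim_{\mathrm{SNR}\to0}l(\mathrm{SNR})$ exists in $[0,\infty]$. Let $C(\mathrm{SNR})$ be the capacity under average power constraint $\mathrm{SNR}$ and peak power constraint $\mathcal{A}(\mathrm{SNR})\,\mathrm{SNR}$. Then, as $\mathrm{SNR}\to0$, $$C(\mathrm{SNR})\approx\begin{cases}\mathrm{SNR}\log\frac{1}{\mathrm{SNR}}, & l_0>0,\\ \mathrm{SNR}\log\mathcal{A}(\mathrm{SNR}), & l_0=0,\end{cases}$$ where $f\approx g$ means $\lim_{\mathrm{SNR}\to0}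f(\mathrm{SNR})/g(\mathrm{SNR})=1$.
   Context: $[u]^+=\max\{0,u\}$; logarithms are natural. $C(\mathrm{SNR})=\sup\mathbf{E}[\log(1+P(h)|h|^2)]$ over measurable $P(h)\ge0$ with $\mathbf{E}[P(h)]\le\mathrm{SNR}$ and $\max_hP(h)\le\mathcal{A}(\mathrm{SNR})\,\mathrm{SNR}$; it equals $\int_\lambda^\infty\min\{\log(t/\lambda),\log(1+\mathcal{A}(\mathrm{SNR})\mathrm{SNR}\,t)\}e^{-t}dt$. *)

From Stdlib Require Import Reals Lra.
Open Scope R_scope.

Definition improper_int (f : R -> R) (a L : R) : Prop :=
  (forall b, a <= b -> inhabited (Riemann_integrable f a b)) /\
  (forall eps, 0 < eps -> exists M, forall b (pr : Riemann_integrable f a b),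
      M < b -> Rabs (RiemannInt pr - L) < eps).

(* Expectation over |h|^2 ~ Exp(1): E[g(|h|^2)] = int_0^oo g(t) e^{-t} dt *)
Definition exp_expect (g : R -> R) (L : R) : Prop :=
  improper_int (fun t => g t * exp (- t)) 0 L.

Definition pos_part (u : R) : R := Rmax 0 u.

Definition lim0 (f : R -> R) (L : R) : Prop :=
  forall eps, 0 < eps -> exists d, 0 < d /\
    forall x, 0 < x < d -> Rabs (f x - L) < eps.

Definition lim0_infty (f : R -> R) : Prop :=
  forall M, exists d, 0 < d /\ forall x, 0 < x < d -> M < f x.

(* Capacity with average power snr and peak power Aval*snr, via the
   closed form from the context:
   C = int_lam^oo min{log(t/lam), log(1 + Aval snr t)} e^{-t} dt,
   where lam is the water level determined by snr (see theorem). *)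
Definition capacity_is (snr Aval lam Cval : R) : Prop :=
  improper_int
    (fun t => Rmin (ln (t / lam)) (ln (1 + Aval * snr * t)) * exp (- t))
    lam Cval.

(* Let p(t) = min([1/lam - 1/t]^+, A SNR) be the clipped water-filling power at gain
   t = |h|^2 and q = p(lam + 1).  For t > lam the capacity integrand is ln(1 + t p(t)),
   which differs from lam p(t) by at most (t - lam) (1 + t - lam)^2 q once lam >= 1;
   integrating against e^-t gives |C - lam SNR| <= 11 q e^-lam, while
   SNR >= (1 - 2/e) q e^-lam because p grows at least linearly on [lam, lam + 1].
   Hence C = lam SNR (1 + O(1/lam)).

   It remains to show that lam -> oo and that the logarithm in the denominator is
   lam + O(ln lam).  From SNR <= A SNR e^-lam and q >= A SNR / (lam + 1) we get
   e^lam <= A <= (lam + 1)^2 e^lam / (1 - 2/e), and A -> oo forces lam -> oo.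
   If l >= c > 0 near 0, then q >= c / (lam (lam + 1)), and likewise
   e^lam <= 1/SNR <= (lam + 1)^2 e^lam / ((1 - 2/e) c). *)

From Stdlib Require Import Reals Lra.
From Coquelicot Require Import Coquelicot.
Open Scope R_scope.

Lemma ln_le_sub1 (y : R) : 0 < y -> ln y <= y - 1.
Proof.
  intros Hy. pose proof (exp_ineq1_le (ln y)) as H. rewrite exp_ln in H; lra.
Qed.

Lemma ln_1p_bounds (x : R) : 0 <= x -> x - x * x <= ln (1 + x) <= x.
Proof.
  intros Hx. split.
  - assert (Hinv := ln_le_sub1 (/ (1 + x)) ltac:(apply Rinv_0_lt_compat; lra)).
    rewrite ln_Rinv in Hinv by lra.
    assert (E : / (1 + x) - 1 = - (x - x * x) - x * x * x / (1 + x)) by (field; lra).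
    assert (0 <= x * x * x / (1 + x)) by (apply Rdiv_le_0_compat; [nra | lra]).
    lra.
  - pose proof (ln_le_sub1 (1 + x)). lra.
Qed.

(** * Clipped water-filling power *)

Definition wf_power (lam a t : R) : R := Rmin (pos_part (/ lam - / t)) a.

Definition wf_rate (lam a t : R) : R := Rmin (ln (t / lam)) (ln (1 + a * t)).

(* [gap (lam s) (A s * s)] is the function [l] of the theorem. *)
Definition gap (lam a : R) : R := / (/ lam - a) - lam.

Section WaterFilling.

Variables lam a : R.
Hypothesis Hlam : 0 < lam.
Hypothesis Ha : 0 <= a.

Lemma pos_part_inv_sub (t : R) : lam <= t -> pos_part (/ lam - / t) = (t - lam) / (lam * t).
Proof.
  intros Ht. unfold pos_part.
  replace (/ lam - / t) with ((t - lam) / (lam * t)) by (field; lra).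
  apply Rmax_right, Rdiv_le_0_compat; nra.
Qed.

Lemma wf_power_eq0 (t : R) : 0 < t <= lam -> wf_power lam a t = 0.
Proof.
  intros Ht. assert (/ lam <= / t) by (apply Rinv_le_contravar; lra).
  unfold wf_power, pos_part. rewrite Rmax_left by lra. apply Rmin_left; lra.
Qed.

Lemma wf_power_ge0 (t : R) : 0 <= wf_power lam a t.
Proof. apply Rmin_glb; [apply Rmax_l | exact Ha]. Qed.

Lemma wf_power_lam_succ : wf_power lam a (lam + 1) = Rmin (/ (lam * (lam + 1))) a.
Proof.
  unfold wf_power. rewrite pos_part_inv_sub by lra. f_equal. field. lra.
Qed.

Lemma wf_power_lam_succ_ge (c : R) : c <= 1 -> c / (lam * (lam + 1)) <= a ->
  c / (lam * (lam + 1)) <= wf_power lam a (lam + 1).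
Proof.
  intros Hc Hca. rewrite wf_power_lam_succ. apply Rmin_glb; [|exact Hca].
  unfold Rdiv. rewrite <- (Rmult_1_l (/ (lam * (lam + 1)))) at 2.
  apply Rmult_le_compat_r; [apply Rlt_le, Rinv_0_lt_compat; nra | exact Hc].
Qed.

Lemma wf_power_ge_lin (t : R) : lam < t <= lam + 1 ->
  (t - lam) * wf_power lam a (lam + 1) <= wf_power lam a t.
Proof.
  intros Ht. rewrite wf_power_lam_succ, Rmult_min_distr_l by lra.
  unfold wf_power. rewrite pos_part_inv_sub by lra.
  eapply Rle_trans; [apply Rle_min_compat_r | apply Rle_min_compat_l].
  - unfold Rdiv. apply Rmult_le_compat_l; [lra|]. apply Rinv_le_contravar; nra.
  - nra.
Qed.

Lemma wf_power_le_lin (t : R) : lam < t ->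
  wf_power lam a t <= (1 + (t - lam)) * wf_power lam a (lam + 1).
Proof.
  intros Ht. rewrite wf_power_lam_succ, Rmult_min_distr_l by lra.
  unfold wf_power. rewrite pos_part_inv_sub by lra.
  eapply Rle_trans; [apply Rle_min_compat_r | apply Rle_min_compat_l].
  - replace ((1 + (t - lam)) * / (lam * (lam + 1))) with ((1 + (t - lam)) / (lam * (lam + 1)))
      by reflexivity.
    apply Rmult_le_reg_r with (lam * t * (lam * (lam + 1)));
      [repeat apply Rmult_lt_0_compat; lra|].
    replace ((t - lam) / (lam * t) * (lam * t * (lam * (lam + 1))))
      with ((t - lam) * (lam * (lam + 1))) by (field; lra).
    replace ((1 + (t - lam)) / (lam * (lam + 1)) * (lam * t * (lam * (lam + 1))))
      with ((1 + (t - lam)) * (lam * t)) by (field; lra).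
    assert (0 <= lam * (lam + (t - lam) * (t - lam))) by (apply Rmult_le_pos; nra).
    nra.
  - nra.
Qed.

Lemma wf_rate_eq (t : R) : lam < t -> wf_rate lam a t = ln (1 + t * wf_power lam a t).
Proof.
  intros Ht. unfold wf_rate, wf_power. rewrite pos_part_inv_sub by lra.
  assert (E : 1 + t * ((t - lam) / (lam * t)) = t / lam) by (field; lra).
  unfold Rmin at 2. destruct (Rle_dec ((t - lam) / (lam * t)) a) as [Hle | Hgt].
  - rewrite E. apply Rmin_left, ln_le; [apply Rdiv_lt_0_compat; lra|]. rewrite <- E. nra.
  - rewrite Rmult_comm. apply Rmin_right, ln_le; [nra|]. rewrite <- E. nra.
Qed.

Lemma wf_rate_sub_err (t : R) : 1 <= lam -> lam < t ->
  Rabs (wf_rate lam a t - lam * wf_power lam a t)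
  <= (t - lam) * (1 + (t - lam)) ^ 2 * wf_power lam a (lam + 1).
Proof.
  intros H1 Ht. rewrite wf_rate_eq by lra.
  pose proof (wf_power_le_lin t Ht) as Hup.
  pose proof (wf_power_ge0 t) as Hp0. pose proof (wf_power_ge0 (lam + 1)) as Hq0.
  set (p := wf_power lam a t) in *. set (q := wf_power lam a (lam + 1)) in *.
  set (u := t - lam) in *.
  assert (Hpu : p * (lam * t) <= u).
  { unfold p, wf_power. eapply Rle_trans.
    - apply Rmult_le_compat_r; [nra | apply Rmin_l].
    - rewrite pos_part_inv_sub by lra. unfold u. right. field. lra. }
  assert (Hx0 : 0 <= t * p) by nra.
  destruct (ln_1p_bounds (t * p) Hx0) as [Hlo Hhi].
  assert (Hlin : u * p <= u * (1 + u) ^ 2 * q).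
  { assert (0 <= u * (1 + u) * q) by (apply Rmult_le_pos; [nra | lra]). unfold u in *. nra. }
  assert (Hsq : t * p * (t * p) <= u * (1 + u) ^ 2 * q).
  { assert (Htu : t <= lam * (1 + u)) by (unfold u; nra).
    assert (H2 : t * p * (t * p) * lam <= u * (t * ((1 + u) * q))).
    { replace (t * p * (t * p) * lam) with ((p * (lam * t)) * (t * p)) by ring.
      apply Rmult_le_compat; nra. }
    assert (H3 : u * (t * ((1 + u) * q)) <= u * (1 + u) ^ 2 * q * lam).
    { assert (0 <= u * ((1 + u) * q)) by (apply Rmult_le_pos; [unfold u; lra | nra]). nra. }
    nra. }
  assert (Hdiff : t * p - lam * p = u * p) by (unfold u; ring).
  apply Rabs_le. split; nra.
Qed.

Lemma peak_lower_of_gap (c : R) : 0 < c <= 1 -> lam * a < 1 -> c <= gap lam a ->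
  c / (lam * (lam + 1)) <= a.
Proof.
  unfold gap. intros Hc Hla Hgap.
  assert (Hw : 0 < / lam - a).
  { apply Rmult_lt_reg_l with lam; [lra|]. rewrite Rmult_minus_distr_l, Rinv_r; lra. }
  assert (Hw' : / lam - a <= / (lam + c)).
  { rewrite <- (Rinv_inv (/ lam - a)). apply Rinv_le_contravar; [lra | lra]. }
  assert (E : / lam - / (lam + c) = c / (lam * (lam + c))) by (field; lra).
  apply Rle_trans with (c / (lam * (lam + c))); [|lra].
  unfold Rdiv. apply Rmult_le_compat_l; [lra|]. apply Rinv_le_contravar; nra.
Qed.

End WaterFilling.

Lemma improper_int_ex_RInt (f : R -> R) (a L b : R) :
  improper_int f a L -> a <= b -> ex_RInt f a b.
Proof. intros [Hint _] Hab. destruct (Hint b Hab) as [pr]. exact (ex_RInt_Reals_1 f a b pr). Qed.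

Lemma improper_int_is_lim (f : R -> R) (a L : R) :
  improper_int f a L -> is_lim (fun b => RInt f a b) p_infty L.
Proof.
  intros [Hint Hlim]. apply is_lim_spec. intros eps.
  destruct (Hlim eps (cond_pos eps)) as [M HM].
  exists (Rmax M a). intros b Hb.
  pose proof (Rmax_l M a). pose proof (Rmax_r M a).
  destruct (Hint b ltac:(lra)) as [pr]. rewrite (RInt_Reals f a b pr). apply HM. lra.
Qed.

Lemma is_lim_p_infty_le (u : R -> R) (L U : R) : is_lim u p_infty L ->
  (exists M, forall b, M < b -> u b <= U) -> L <= U.
Proof. intros Hu HU. exact (is_lim_le_loc u (fun _ => U) p_infty L U HU Hu (is_lim_const U _)). Qed.

Lemma is_lim_p_infty_ge (u : R -> R) (L U : R) : is_lim u p_infty L ->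
  (exists M, forall b, M < b -> U <= u b) -> U <= L.
Proof. intros Hu HU. exact (is_lim_le_loc (fun _ => U) u p_infty U L HU (is_lim_const U _) Hu). Qed.

Lemma RInt_antiderivative (F f : R -> R) (a b : R) :
  (forall x, is_derive F x (f x)) -> (forall x, ex_derive f x) -> @eq R (RInt f a b) (F b - F a).
Proof.
  intros HF Hf. apply is_RInt_unique. apply (is_RInt_derive F f a b).
  - intros x _. apply HF.
  - intros x _. exact (ex_derive_continuous f x (Hf x)).
Qed.

Lemma ex_RInt_ex_derive (f : R -> R) (a b : R) : (forall x, ex_derive f x) -> ex_RInt f a b.
Proof.
  intros Hf. apply (ex_RInt_continuous (V := R_CompleteNormedModule)). intros x _.
  exact (ex_derive_continuous f x (Hf x)).
Qed.

Lemma is_RInt_sub_scal (f g : R -> R) (k a b : R) : ex_RInt f a b -> ex_RInt g a b ->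
  is_RInt (fun t => f t - k * g t) a b (RInt f a b - k * RInt g a b).
Proof.
  intros Hf Hg.
  exact (is_RInt_minus _ _ a b _ _ (RInt_correct f a b Hf)
           (is_RInt_scal _ a b k _ (RInt_correct g a b Hg))).
Qed.

Lemma abs_RInt_le_RInt (f g : R -> R) (a b : R) : a <= b -> ex_RInt f a b -> ex_RInt g a b ->
  (forall x, a < x < b -> Rabs (f x) <= g x) -> Rabs (RInt f a b) <= RInt g a b.
Proof.
  intros Hab Hf Hg Hfg. apply Rabs_le. split.
  - assert (E : RInt (fun x => - g x) a b = - RInt g a b) by exact (RInt_opp g a b Hg).
    rewrite <- E. apply RInt_le; auto.
    + exact (ex_RInt_opp g a b Hg).
    + intros x Hx. specialize (Hfg x Hx). apply Rabs_le_between in Hfg. lra.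
  - apply RInt_le; auto. intros x Hx. specialize (Hfg x Hx). apply Rabs_le_between in Hfg. lra.
Qed.

(** * Bounds at a fixed SNR *)

(* [kappa] is the integral of [u e^-u] over [0, 1]. *)
Definition kappa : R := 1 - 2 * exp (-1).

Lemma kappa_pos : 0 < kappa.
Proof.
  unfold kappa. pose proof (exp_ineq1 1 ltac:(lra)).
  assert (E : exp (-1) * exp 1 = 1) by (rewrite <- exp_plus; replace (-1 + 1) with 0 by ring; apply exp_0).
  pose proof (exp_pos (-1)). nra.
Qed.

Section FixedSnr.

Variables s lam P : R.
Hypothesis Hs : 0 < s.
Hypothesis Hlam : 0 < lam.
Hypothesis HP : 0 < P.
Hypothesis Havg : exp_expect (wf_power lam (P * s)) s.

Let HPs : 0 <= P * s.
Proof. apply Rlt_le, Rmult_lt_0_compat; assumption. Qed.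

Lemma avg_integrand_ex_RInt (b : R) : lam <= b ->
  ex_RInt (fun t => wf_power lam (P * s) t * exp (- t)) lam b.
Proof.
  intros Hb. apply (ex_RInt_Chasles_2 (V := R_CompleteNormedModule)) with 0; [lra|].
  exact (improper_int_ex_RInt _ _ _ b Havg ltac:(lra)).
Qed.

Lemma avg_power_is_lim :
  is_lim (fun b => RInt (fun t => wf_power lam (P * s) t * exp (- t)) lam b) p_infty s.
Proof.
  set (f := fun t => wf_power lam (P * s) t * exp (- t)).
  apply (is_lim_ext_loc (fun b => RInt f 0 b)); [|exact (improper_int_is_lim _ _ _ Havg)].
  exists lam. intros b Hb.
  rewrite <- (RInt_Chasles (V := R_CompleteNormedModule) f 0 lam b);
    [| apply (ex_RInt_Chasles_1 (V := R_CompleteNormedModule)) with b; [lra|]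
     | apply avg_integrand_ex_RInt; lra];
    [| exact (improper_int_ex_RInt _ _ _ b Havg ltac:(lra))].
  rewrite (RInt_ext (V := R_CompleteNormedModule) f (fun _ => 0)), RInt_const.
  - change (@eq R ((lam - 0) * 0 + RInt f lam b) (RInt f lam b)). lra.
  - intros x Hx. rewrite Rmin_left, Rmax_right in Hx by lra.
    unfold f. rewrite wf_power_eq0 by lra. apply Rmult_0_l.
Qed.

Lemma snr_ge : kappa * wf_power lam (P * s) (lam + 1) * exp (- lam) <= s.
Proof.
  apply (is_lim_p_infty_ge _ _ _ avg_power_is_lim). exists (lam + 1). intros b Hb. cbv beta.
  set (q := wf_power lam (P * s) (lam + 1)).
  set (f := fun t => wf_power lam (P * s) t * exp (- t)).
  rewrite <- (RInt_Chasles (V := R_CompleteNormedModule) f lam (lam + 1) b);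
    [| apply avg_integrand_ex_RInt; lra
     | apply (ex_RInt_Chasles_2 (V := R_CompleteNormedModule)) with lam;
       [lra | apply avg_integrand_ex_RInt; lra]].
  assert (Htail : 0 <= RInt f (lam + 1) b).
  { apply RInt_ge_0; [lra | |].
    - apply (ex_RInt_Chasles_2 (V := R_CompleteNormedModule)) with lam;
        [lra | apply avg_integrand_ex_RInt; lra].
    - intros x _. apply Rmult_le_pos; [apply wf_power_ge0; lra | apply Rlt_le, exp_pos]. }
  assert (Hhead : RInt (fun t => q * (t - lam) * exp (- t)) lam (lam + 1) <= RInt f lam (lam + 1)).
  { apply RInt_le; [lra | apply ex_RInt_ex_derive; intro; auto_derive; auto
                   | apply avg_integrand_ex_RInt; lra |].
    intros x Hx. unfold f. apply Rmult_le_compat_r; [apply Rlt_le, exp_pos|].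
    rewrite Rmult_comm. apply wf_power_ge_lin; lra. }
  rewrite (RInt_antiderivative (fun t => - q * (t - lam + 1) * exp (- t))) in Hhead;
    [| intro; auto_derive; auto; ring | intro; auto_derive; auto].
  assert (Hcalc : - q * (lam + 1 - lam + 1) * exp (- (lam + 1)) - - q * (lam - lam + 1) * exp (- lam)
                  = kappa * q * exp (- lam)).
  { unfold kappa. replace (- (lam + 1)) with (- lam + -1) by ring. rewrite exp_plus. ring. }
  change (plus ?x ?y) with (x + y). lra.
Qed.

Lemma snr_le : s <= P * s * exp (- lam).
Proof.
  apply (is_lim_p_infty_le _ _ _ avg_power_is_lim). exists lam. intros b Hb.
  apply Rle_trans with (RInt (fun t => P * s * exp (- t)) lam b).
  - apply RInt_le; [lra | apply avg_integrand_ex_RInt; lra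
                   | apply ex_RInt_ex_derive; intro; auto_derive; auto |].
    intros x _. apply Rmult_le_compat_r; [apply Rlt_le, exp_pos | apply Rmin_r].
  - rewrite (RInt_antiderivative (fun t => - (P * s) * exp (- t)));
      [| intro; auto_derive; auto; ring | intro; auto_derive; auto].
    pose proof (exp_pos (- b)). nra.
Qed.

Lemma exp_le_papr : exp lam <= P.
Proof.
  pose proof snr_le as H. rewrite exp_Ropp in H.
  pose proof (exp_pos lam).
  apply Rmult_le_reg_r with (s * / exp lam); [apply Rmult_lt_0_compat; auto; apply Rinv_0_lt_compat; lra|].
  replace (exp lam * (s * / exp lam)) with s by (field; lra). lra.
Qed.

Lemma snr_exp_ge (m : R) : m <= wf_power lam (P * s) (lam + 1) -> kappa * m <= s * exp lam.
Proof.
  intros Hm. pose proof snr_ge as H. pose proof kappa_pos. pose proof (exp_pos lam).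
  rewrite exp_Ropp in H.
  apply Rle_trans with (kappa * wf_power lam (P * s) (lam + 1)); [apply Rmult_le_compat_l; lra|].
  apply Rmult_le_reg_r with (/ exp lam); [apply Rinv_0_lt_compat; lra|].
  replace (s * exp lam * / exp lam) with s by (field; lra). exact H.
Qed.

Hypothesis Hpeak : lam * P * s < 1.

Lemma papr_le : P <= (lam + 1) ^ 2 * exp lam / kappa.
Proof.
  assert (Hq : P * s / (lam + 1) <= wf_power lam (P * s) (lam + 1)).
  { replace (P * s / (lam + 1)) with (lam * P * s / (lam * (lam + 1))) by (field; lra).
    apply wf_power_lam_succ_ge; [lra | lra |].
    replace (lam * P * s / (lam * (lam + 1))) with (P * s * / (lam + 1)) by (field; lra).
    rewrite <- (Rmult_1_r (P * s)) at 2. apply Rmult_le_compat_l; [lra|].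
    rewrite <- Rinv_1. apply Rinv_le_contravar; lra. }
  pose proof (snr_exp_ge _ Hq) as H. pose proof kappa_pos. pose proof (exp_pos lam).
  assert (HkP : kappa * P <= (lam + 1) * exp lam).
  { apply Rmult_le_reg_r with (s / (lam + 1)); [apply Rdiv_lt_0_compat; lra|].
    replace (kappa * P * (s / (lam + 1))) with (kappa * (P * s / (lam + 1))) by (field; lra).
    replace ((lam + 1) * exp lam * (s / (lam + 1))) with (s * exp lam) by (field; lra).
    exact H. }
  apply Rmult_le_reg_l with kappa; [lra|].
  replace (kappa * ((lam + 1) ^ 2 * exp lam / kappa)) with ((lam + 1) * ((lam + 1) * exp lam))
    by (field; lra).
  nra.
Qed.

Lemma exp_le_inv_snr : 1 <= lam -> exp lam <= / s.
Proof.
  intros H1. pose proof snr_le as H. rewrite exp_Ropp in H. pose proof (exp_pos lam).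
  assert (Ha1 : P * s <= 1) by (apply Rmult_le_reg_l with lam; nra).
  rewrite <- (Rinv_inv (exp lam)). apply Rinv_le_contravar; [lra|].
  apply Rle_trans with (P * s * / exp lam); [lra|].
  rewrite <- (Rmult_1_l (/ exp lam)) at 2.
  apply Rmult_le_compat_r; [apply Rlt_le, Rinv_0_lt_compat|]; lra.
Qed.

Lemma inv_snr_le (c : R) : 0 < c <= 1 -> c <= gap lam (P * s) ->
  / s <= (lam + 1) ^ 2 * exp lam / (kappa * c).
Proof.
  intros Hc Hgap.
  assert (Hq : c / (lam * (lam + 1)) <= wf_power lam (P * s) (lam + 1)).
  { apply wf_power_lam_succ_ge; [lra | lra |].
    apply peak_lower_of_gap; [lra | lra | rewrite <- Rmult_assoc; lra | exact Hgap]. }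
  pose proof (snr_exp_ge _ Hq) as H. pose proof kappa_pos. pose proof (exp_pos lam).
  apply Rmult_le_reg_r with (s * (kappa * c * / (lam * (lam + 1)))).
  { apply Rmult_lt_0_compat; [lra|]. apply Rmult_lt_0_compat; [nra | apply Rinv_0_lt_compat; nra]. }
  replace (/ s * (s * (kappa * c * / (lam * (lam + 1))))) with (kappa * (c / (lam * (lam + 1))))
    by (field; lra).
  replace ((lam + 1) ^ 2 * exp lam / (kappa * c) * (s * (kappa * c * / (lam * (lam + 1)))))
    with ((lam + 1) / lam * (s * exp lam)) by (field; nra).
  eapply Rle_trans; [exact H|].
  rewrite <- (Rmult_1_l (s * exp lam)) at 1.
  apply Rmult_le_compat_r; [apply Rlt_le, Rmult_lt_0_compat; lra|].
  apply Rmult_le_reg_r with lam; [lra|]. replace ((lam + 1) / lam * lam) with (lam + 1) by (field; lra).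
  lra.
Qed.

Variable Cv : R.
Hypothesis Hcap : capacity_is s P lam Cv.

Lemma capacity_partial_err (b : R) : 1 <= lam -> lam < b ->
  Rabs (RInt (fun t => wf_rate lam (P * s) t * exp (- t)) lam b
        - lam * RInt (fun t => wf_power lam (P * s) t * exp (- t)) lam b)
  <= 11 * wf_power lam (P * s) (lam + 1) * exp (- lam).
Proof.
  intros H1 Hb.
  set (q := wf_power lam (P * s) (lam + 1)).
  set (fS := fun t => wf_power lam (P * s) t * exp (- t)).
  set (fC := fun t => wf_rate lam (P * s) t * exp (- t)).
  set (g := fun t => q * ((t - lam) * (1 + (t - lam)) ^ 2) * exp (- t)).
  assert (Hq0 : 0 <= q) by (apply wf_power_ge0; lra).
  assert (HC : ex_RInt fC lam b) by exact (improper_int_ex_RInt _ _ _ b Hcap ltac:(lra)).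
  assert (HS : ex_RInt fS lam b) by (apply avg_integrand_ex_RInt; lra).
  assert (Hdiff := is_RInt_sub_scal fC fS lam lam b HC HS).
  rewrite <- (is_RInt_unique _ _ _ _ Hdiff).
  eapply Rle_trans.
  - apply (abs_RInt_le_RInt _ g); [lra | eexists; exact Hdiff
                                | apply ex_RInt_ex_derive; intro; unfold g; auto_derive; auto |].
    intros x Hx. unfold fC, fS, g.
    replace (wf_rate lam (P * s) x * exp (- x) - lam * (wf_power lam (P * s) x * exp (- x)))
      with ((wf_rate lam (P * s) x - lam * wf_power lam (P * s) x) * exp (- x)) by ring.
    rewrite Rabs_mult, (Rabs_pos_eq (exp (- x))) by (apply Rlt_le, exp_pos).
    apply Rmult_le_compat_r; [apply Rlt_le, exp_pos|].
    pose proof (wf_rate_sub_err lam (P * s) Hlam HPs x H1 (proj1 Hx)). fold q in H. lra.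
  - rewrite (RInt_antiderivative
               (fun t => - q * ((t - lam) ^ 3 + 5 * (t - lam) ^ 2 + 11 * (t - lam) + 11) * exp (- t)));
      [| intro; unfold g; auto_derive; auto; ring | intro; unfold g; auto_derive; auto].
    assert (Hu : 0 <= b - lam) by lra.
    pose proof (pow_le _ 3 Hu). pose proof (pow_le _ 2 Hu). pose proof (exp_pos (- b)).
    assert (0 <= q * (((b - lam) ^ 3 + 5 * (b - lam) ^ 2 + 11 * (b - lam) + 11) * exp (- b)))
      by (apply Rmult_le_pos; [lra | apply Rmult_le_pos; lra]).
    replace (lam - lam) with 0 by ring. nra.
Qed.

Lemma capacity_sub_err : 1 <= lam ->
  Rabs (Cv - lam * s) <= 11 * wf_power lam (P * s) (lam + 1) * exp (- lam).
Proof.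
  intros H1.
  assert (Hlim : is_lim (fun b => RInt (fun t => wf_rate lam (P * s) t * exp (- t)) lam b
                           - lam * RInt (fun t => wf_power lam (P * s) t * exp (- t)) lam b)
                  p_infty (Cv - lam * s)).
  { exact (is_lim_minus' _ _ _ _ _ (improper_int_is_lim _ _ _ Hcap)
             (is_lim_scal_l _ lam _ _ avg_power_is_lim)). }
  apply Rabs_le_between. split;
    [apply (is_lim_p_infty_ge _ _ _ Hlim) | apply (is_lim_p_infty_le _ _ _ Hlim)];
    exists lam; intros b Hb; pose proof (capacity_partial_err b H1 Hb) as Hp;
    apply Rabs_le_between in Hp; lra.
Qed.

Lemma capacity_err : 1 <= lam -> Rabs (Cv - lam * s) <= 11 / kappa * s.
Proof.
  intros H1. pose proof kappa_pos. eapply Rle_trans; [exact (capacity_sub_err H1)|].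
  replace (11 * wf_power lam (P * s) (lam + 1) * exp (- lam))
    with (11 / kappa * (kappa * wf_power lam (P * s) (lam + 1) * exp (- lam))) by (field; lra).
  apply Rmult_le_compat_l; [apply Rlt_le, Rdiv_lt_0_compat; lra | exact snr_ge].
Qed.

End FixedSnr.

(** * Asymptotics as SNR -> 0 *)

Lemma lim0_infty_inv : lim0_infty (fun s => / s).
Proof.
  intros M. set (M1 := Rmax M 1).
  assert (HM1 : M <= M1 /\ 1 <= M1) by (split; [apply Rmax_l | apply Rmax_r]).
  exists (/ M1). split; [apply Rinv_0_lt_compat; lra|].
  intros s Hs. rewrite <- (Rinv_inv M1) in HM1.
  assert (/ / M1 < / s) by (apply Rinv_lt_contravar; [nra | lra]). lra.
Qed.

Lemma lim0_eventually_ge_pos (l : R -> R) :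
  (exists l0, 0 < l0 /\ lim0 l l0) \/ lim0_infty l ->
  exists c, 0 < c <= 1 /\ exists d, 0 < d /\ forall s, 0 < s < d -> c <= l s.
Proof.
  intros [[l0 [Hl0 Hlim]] | Hinf].
  - destruct (Hlim (l0 / 2) ltac:(lra)) as [d [Hd Hd']].
    exists (Rmin (l0 / 2) 1). split; [split; [apply Rmin_glb_lt; lra | apply Rmin_r]|].
    exists d. split; [exact Hd|]. intros s Hs.
    specialize (Hd' s Hs). apply Rabs_def2 in Hd'. pose proof (Rmin_l (l0 / 2) 1). lra.
  - destruct (Hinf 1) as [d [Hd Hd']]. exists 1. split; [lra|].
    exists d. split; [exact Hd|]. intros s Hs. specialize (Hd' s Hs). lra.
Qed.

Lemma lim0_infty_of_le (s0 k : R) (lam X : R -> R) : 0 < s0 -> 0 < k -> lim0_infty X ->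
  (forall s, 0 < s < s0 -> 0 < lam s /\ X s <= (lam s + 1) ^ 2 * exp (lam s) / k) ->
  lim0_infty lam.
Proof.
  intros Hs0 Hk HX Hb M. set (M1 := Rmax M 0).
  assert (HM1 : M <= M1 /\ 0 <= M1) by (split; [apply Rmax_l | apply Rmax_r]).
  destruct (HX ((M1 + 1) ^ 2 * exp M1 / k)) as [d [Hd Hd']].
  exists (Rmin d s0). split; [apply Rmin_glb_lt; lra|].
  intros s Hs. pose proof (Rmin_l d s0). pose proof (Rmin_r d s0).
  destruct (Hb s ltac:(lra)) as [Hpos HXs]. specialize (Hd' s ltac:(lra)).
  destruct (Rlt_or_le M1 (lam s)) as [|Hle]; [lra|]. exfalso.
  assert ((lam s + 1) ^ 2 * exp (lam s) / k <= (M1 + 1) ^ 2 * exp M1 / k).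
  { unfold Rdiv. apply Rmult_le_compat_r; [apply Rlt_le, Rinv_0_lt_compat; lra|].
    apply Rmult_le_compat; [apply pow_le; lra | apply Rlt_le, exp_pos | |].
    - apply pow_incr. lra.
    - destruct Hle as [Hlt | ->]; [apply Rlt_le, exp_increasing, Hlt | lra]. }
  lra.
Qed.

Lemma ln_sublinear (c : R) : is_lim (fun x => (c + 2 * ln x) / x) p_infty 0.
Proof.
  apply (is_lim_ext (fun x => c * / x + 2 * (ln x / x))); [intros x; unfold Rdiv; ring|].
  replace (Finite 0) with (Finite (c * 0 + 2 * 0)) by (f_equal; ring).
  apply is_lim_plus'.
  - exact (is_lim_scal_l _ c _ _ (is_lim_inv _ _ _ (is_lim_id p_infty) ltac:(discriminate))).
  - exact (is_lim_scal_l _ 2 _ _ is_lim_div_ln_p).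
Qed.

Lemma ln_bounds_of_exp_bounds (lam X k : R) : 1 <= lam -> 0 < k ->
  exp lam <= X -> X <= (lam + 1) ^ 2 * exp lam / k ->
  lam <= ln X <= lam + (2 * ln 2 - ln k) + 2 * ln lam.
Proof.
  intros H1 Hk Hlo Hhi. pose proof (exp_pos lam). split.
  - rewrite <- (ln_exp lam) at 1. apply ln_le; [apply exp_pos | exact Hlo].
  - apply Rle_trans with (ln ((2 * lam) * (2 * lam) * exp lam / k)).
    + apply ln_le; [lra|]. eapply Rle_trans; [exact Hhi|].
      unfold Rdiv. apply Rmult_le_compat_r; [apply Rlt_le, Rinv_0_lt_compat; lra|].
      apply Rmult_le_compat_r; [lra|]. simpl. nra.
    + assert (H2l : 0 < 2 * lam) by lra.
      rewrite ln_div, ln_mult, ln_exp, ln_mult, ln_mult by (repeat apply Rmult_lt_0_compat; try apply exp_pos; lra).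
      lra.
Qed.

Lemma rel_err_le (s lam C T K D : R) : 0 < s -> 1 <= lam -> lam <= T <= lam + D ->
  Rabs (C - lam * s) <= K * s -> Rabs (C / (s * T) - 1) <= (K + D) / lam.
Proof.
  intros Hs H1 HT HC.
  assert (E : C / (s * T) - 1 = ((C - lam * s) + s * (lam - T)) / (s * T)) by (field; lra).
  assert (Hnum : Rabs ((C - lam * s) + s * (lam - T)) <= (K + D) * s).
  { eapply Rle_trans; [apply Rabs_triang|].
    rewrite Rabs_mult, (Rabs_pos_eq s), (Rabs_left1 (lam - T)) by lra. nra. }
  rewrite E, Rabs_div, (Rabs_pos_eq (s * T)) by nra.
  apply Rle_trans with ((K + D) * s / (s * T)).
  - unfold Rdiv. apply Rmult_le_compat_r; [apply Rlt_le, Rinv_0_lt_compat; nra | exact Hnum].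
  - replace ((K + D) * s / (s * T)) with ((K + D) / T) by (field; lra).
    assert (0 <= K + D) by (pose proof (Rabs_pos (C - lam * s + s * (lam - T))); nra).
    unfold Rdiv. apply Rmult_le_compat_l; [lra|]. apply Rinv_le_contravar; lra.
Qed.

Lemma lim0_ratio_ln (s0 k K : R) (lam C X : R -> R) : 0 < s0 -> 0 < k -> lim0_infty X ->
  (forall s, 0 < s < s0 -> 0 < lam s /\ X s <= (lam s + 1) ^ 2 * exp (lam s) / k /\
     (1 <= lam s -> exp (lam s) <= X s /\ Rabs (C s - lam s * s) <= K * s)) ->
  lim0 (fun s => C s / (s * ln (X s))) 1.
Proof.
  intros Hs0 Hk HX Hb eps Heps.
  assert (Hlam : lim0_infty lam).
  { apply (lim0_infty_of_le s0 k lam X Hs0 Hk HX). intros s Hs. apply Hb in Hs. tauto. }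
  set (c := 2 * ln 2 - ln k).
  destruct (proj2 (is_lim_spec _ _ _) (ln_sublinear (K + c)) (mkposreal eps Heps)) as [M HM].
  destruct (Hlam (Rmax M 1)) as [d [Hd Hd']].
  exists (Rmin d s0). split; [apply Rmin_glb_lt; lra|].
  intros s Hs. pose proof (Rmin_l d s0). pose proof (Rmin_r d s0).
  assert (HlM := Hd' s ltac:(lra)). pose proof (Rmax_l M 1). pose proof (Rmax_r M 1).
  destruct (Hb s ltac:(lra)) as [_ [HXhi HXlo]]. destruct (HXlo ltac:(lra)) as [HXlo' HCs].
  assert (HT := ln_bounds_of_exp_bounds (lam s) (X s) k ltac:(lra) Hk HXlo' HXhi). fold c in HT.
  eapply Rle_lt_trans; [apply (rel_err_le s (lam s) (C s) (ln (X s)) K (c + 2 * ln (lam s))); lra|].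
  specialize (HM (lam s) ltac:(lra)). simpl in HM.
  rewrite Rminus_0_r in HM. replace (K + (c + 2 * ln (lam s))) with (K + c + 2 * ln (lam s)) by ring.
  apply Rabs_def2 in HM. lra.
Qed.

Theorem theorem2
  (A lam0 lam C : R -> R) (s0 : R) (Hs0 : 0 < s0)
  (* lam0 : unconstrained water level, SNR = E[[1/lam0 - 1/|h|^2]^+] *)
  (Hlam0 : forall s, 0 < s < s0 -> 0 < lam0 s /\
     exp_expect (fun t => pos_part (/ lam0 s - / t)) s)
  (* peak constraint effective *)
  (Heff : forall s, 0 < s < s0 -> A s * s < / lam0 s)
  (* lam : SNR = E[min{[1/lam - 1/|h|^2]^+, A SNR}], lam A SNR < 1 *)
  (Hlam : forall s, 0 < s < s0 -> 0 < lam s /\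
     exp_expect (fun t => Rmin (pos_part (/ lam s - / t)) (A s * s)) s /\
     lam s * A s * s < 1)
  (* capacity *)
  (HC : forall s, 0 < s < s0 -> capacity_is s (A s) (lam s) (C s))
  (* variable PAPR *)
  (HA : lim0_infty A)
  (HAs : lim0 (fun s => A s * s) 0) :
  let l := fun s => / (/ lam s - A s * s) - lam s in
  ((exists l0, 0 < l0 /\ lim0 l l0) \/ lim0_infty l ->
     lim0 (fun s => C s / (s * ln (/ s))) 1) /\
  (lim0 l 0 ->
     lim0 (fun s => C s / (s * ln (A s))) 1).
Proof.
  intros l.
  destruct (HA 0) as [dA [HdA HApos]].
  set (s1 := Rmin s0 dA).
  assert (Hs1 : 0 < s1) by (apply Rmin_glb_lt; lra).
  assert (Hrange : forall s, 0 < s < s1 -> 0 < s < s0 /\ 0 < A s).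
  { intros s Hs. unfold s1 in Hs. pose proof (Rmin_l s0 dA). pose proof (Rmin_r s0 dA).
    split; [lra | apply HApos; lra]. }
  pose proof kappa_pos as Hkappa.
  split.
  - intros Hl. destruct (lim0_eventually_ge_pos l Hl) as [c [Hc [dc [Hdc Hgap]]]].
    apply (lim0_ratio_ln (Rmin s1 dc) (kappa * c) (11 / kappa) lam C (fun s => / s));
      [apply Rmin_glb_lt; lra | apply Rmult_lt_0_compat; lra | exact lim0_infty_inv |].
    intros s Hs. pose proof (Rmin_l s1 dc). pose proof (Rmin_r s1 dc).
    destruct (Hrange s ltac:(lra)) as [Hs' HApos_s]. destruct (Hlam s Hs') as [Hl0 [Havg Hpeak]].
    split; [exact Hl0 | split].
    + exact (inv_snr_le s (lam s) (A s) ltac:(lra) Hl0 HApos_s Havg Hpeak c Hc (Hgap s ltac:(lra))).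
    + intros H1. split; [exact (exp_le_inv_snr s (lam s) (A s) ltac:(lra) Hl0 HApos_s Havg Hpeak H1)|].
      exact (capacity_err s (lam s) (A s) ltac:(lra) Hl0 HApos_s Havg (C s) (HC s Hs') H1).
  - (* [ln A = lam + O(ln lam)] holds whatever the limit of [l] is. *)
    intros _. apply (lim0_ratio_ln s1 kappa (11 / kappa) lam C A Hs1 Hkappa HA).
    intros s Hs. destruct (Hrange s Hs) as [Hs' HApos_s]. destruct (Hlam s Hs') as [Hl0 [Havg Hpeak]].
    split; [exact Hl0 | split].
    + exact (papr_le s (lam s) (A s) ltac:(lra) Hl0 HApos_s Havg Hpeak).
    + intros H1. split; [exact (exp_le_papr s (lam s) (A s) ltac:(lra) Hl0 HApos_s Havg)|].
      exact (capacity_err s (lam s) (A s) ltac:(lra) Hl0 HApos_s Havg (C s) (HC s Hs') H1).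
Qed.
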